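(* Let $(\mathcal{E},\Sigma,\partial,\mathcal{M})$ be a decoding problem with fault distance $d$, let $\mathcal{E}=C_1\sqcup\dots\sqcup C_n$ be a partition into commit regions processed in the order $1,\dots,n$, and for each $i$ let $B_i\subseteq \mathcal{E}\setminus(P_i\cup C_i)$ be a buffer region, where $P_i$, $F_i$, $\Sigma_{V_i}$ and $\partial_{V_i}$ are as defined in the context. Run the modular decoding procedure described in the context. Assume that for every $i$: 1. (Local decoder soundness) whenever the input syndrome $s=\partial_{V_i}(\kappa_{P_i}+\epsilon)$ satisfies $s=\partial_{V_i}\eta$ for some $\eta\subseteq C_i\cup B_i$ with $|\eta|<d/2$, the local decoder for task $i$ returns some $\mu_i\subseteq C_i\cup B_i$ with $\partial_{V_i}\mu_i=s$ and $|\mu_i|\le|\mu'|$ for every $\mu'\subseteq C_i\cup B_i$ with $\partial_{V_i}\mu'=s$; 2. (Buffering condition) every connected error $\eta\in\mathbb{Z}_2^{\mathcal{E}}$ such that $\eta\subseteq C_i\cup B_i$, $\partial_{V_i}\eta=0$, $\eta\cap C_i\neq\emptyset$ and $\partial\eta\neq 0$ has weight $|\eta|\ge d$. Then for every physical error $\epsilon\in\mathbb{Z}_2^{\mathcal{E}}$ with $|\epsilon|<d/2$: no task aborts, and the global correction $\kappa=\sum_{i=1}^n\kappa_i$ satisfies $\partial\kappa=\partial\epsilon$ and $|\kappa|\le|\epsilon|$. Consequently $\kappa$ is a minimum-weight correction for the syndrome $\partial\epsilon$ (i.e. $|\kappa|\le|\kappa'|$ for all $\kappa'$ with $\partial\kappa'=\partial\epsilon$),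 and $\kappa_{\mathcal{M}}=\epsilon_{\mathcal{M}}$.
   Context: Setting. $\mathcal{E}$ is a finite set of elementary error generators and $\Sigma$ a finite set of check generators. Errors are elements of $\mathbb{Z}_2^{\mathcal{E}}$, identified with subsets of $\mathcal{E}$ via indicator vectors; addition is symmetric difference, and for $\eta\in\mathbb{Z}_2^{\mathcal E}$ and $A\subseteq\mathcal{E}$, $\eta_A:=\eta\cap A$. The weight $|\eta|$ is the cardinality of $\eta$. There is a linear syndrome map $\partial:\mathbb{Z}_2^{\mathcal{E}}\to\mathbb{Z}_2^{\Sigma}$; $\eta$ is undetectable if $\partial\eta=0$. $\mathcal{M}$ is a set of logical outcomes, and each error $\eta$ has a linear logical effect $\eta_{\mathcal{M}}\in\mathbb{Z}_2^{\mathcal{M}}$ (linear in $\eta$). The fault distance $d$ is the minimum weight of an error $\eta$ with $\partial\eta=0$ and $\eta_{\mathcal{M}}\neq0$. Connectedness. Two generators $e_1,e_2\in\mathcal{E}$ are directly connected if there is $\sigma\in\Sigma$ with $\partial e_1(\sigma)=\partial e_2(\sigma)=1$. An error $\eta$ (as a set) is connected if it is connected under this adjacency relation; its connected components are the maximal connected subsets. Modular decoding. Commit regions $C_1,\dots,C_n$ partition $\mathcal{E}$ and are processed in the order $1,\dots,n$. For task $i$: the past is $P_i:=C_1\cup\dots\cup C_{i-1}$; the buffer is $B_i\subseteq\mathcal{E}\setminus(P_i\cup C_i)$; the future is $F_i:=\mathcal{E}\setminus(P_i\cup C_i\cup B_i)$. The visible checks are $\Sigma_{V_i}:=\{\sigma\in\Sigma:\partial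 f(\sigma)=0\ \text{for all } f\in F_i\}$, and $\partial_{V_i}\eta$ denotes the restriction of $\partial\eta$ to $\Sigma_{V_i}$. Let $\kappa_{P_i}:=\kappa_1+\dots+\kappa_{i-1}$ (with $\kappa_{P_1}=0$). Task $i$ is given the syndrome $s_i=\partial_{V_i}(\kappa_{P_i}+\epsilon)$ and a local decoder returns a correction estimate $\mu_i\subseteq C_i\cup B_i$ with $\partial_{V_i}\mu_i=s_i$ (the task aborts if no such $\mu_i$ exists); the committed correction is $\kappa_i:=\mu_i\cap C_i$. The global correction is $\kappa:=\kappa_1+\dots+\kappa_n$. *)

From mathcomp Require Import all_boot.
Set Implicit Arguments. Unset Strict Implicit. Unset Printing Implicit Defensive.

Section Decoding.
Variables (E Sig M : finType).
(* D e s = true  iff  (partial e)(s) = 1 : the syndrome map on generators *)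
Variable D : E -> Sig -> bool.
(* L e m = true iff the logical effect of generator e flips outcome m *)
Variable L : E -> M -> bool.

(* errors = subsets of E; addition = symmetric difference *)
Definition symd (A B : {set E}) : {set E} := (A :\: B) :|: (B :\: A).

Definition syn (eta : {set E}) : {set Sig} :=
  [set s | odd #|[set e in eta | D e s]|].

Definition logeff (eta : {set E}) : {set M} :=
  [set m | odd #|[set e in eta | L e m]|].

Definition is_fault_distance (d : nat) : Prop :=
  (exists eta : {set E}, syn eta = set0 /\ logeff eta != set0 /\ #|eta| = d) /\
  (forall eta : {set E}, syn eta = set0 -> logeff eta != set0 -> d <= #|eta|).

Definition adj (e1 e2 : E) : bool := [exists s, D e1 s && D e2 s].
Definition connected_err (eta : {set E}) : Prop :=
  forall x y, x \in eta -> y \in eta ->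
    connect [rel a b | [&& a \in eta, b \in eta & adj a b]] x y.

(* commit regions C 0, ..., C (n-1) (0-indexed), buffers B i *)
Variables (C B : nat -> {set E}).
Definition past (i : nat) : {set E} := \bigcup_(j < i) C j.
Definition future (i : nat) : {set E} := ~: (past i :|: C i :|: B i).
Definition visible (i : nat) : {set Sig} :=
  [set s | [forall f in future i, ~~ D f s]].
Definition synV (i : nat) (eta : {set E}) : {set Sig} := syn eta :&: visible i.

(* local decoder for task i: input syndrome (on visible checks) ->
   correction estimate, or None (abort) *)
Variable dec : nat -> {set Sig} -> option {set E}.

(* kapP eps k = Some kappa_{P_k} = kappa_0 + ... + kappa_{k-1} if none of
   tasks 0..k-1 aborted, None otherwise *)
Fixpoint kapP (eps : {set E}) (k : nat) : option {set E} :=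
  match k with
  | 0 => Some set0
  | k'.+1 =>
    match kapP eps k' with
    | None => None
    | Some K =>
      match dec k' (synV k' (symd K eps)) with
      | None => None
      | Some mu => Some (symd K (mu :&: C k'))
      end
    end
  end.

End Decoding.

From mathcomp Require Import all_boot zify.
Set Implicit Arguments. Unset Strict Implicit. Unset Printing Implicit Defensive.

(* The proof tracks,
   task by task, an invariant [progress eps i K rho]: after the first i tasks
   the committed correction is K, and there is a residual error rho, lying
   outside the past region, with the syndrome of K + eps and with
   |K| + |rho| <= |eps|.  In step i the decoder sees exactly the part rho_i of
   rho inside C i + B i, so it returns a minimal mu.  The difference
   eta = mu + rho_i is invisible to task i; the union S of its connected
   components touching C i is undetectable by the buffering condition, and
   mu + S is again admissible, so |mu| <= |mu + S|.  Replacing rho by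
   rho + (mu /\ C i) + S preserves the invariant (a pointwise count).  After
   the last task the past is everything, so rho = 0: K corrects eps with
   |K| <= |eps|.  Minimality and the logical statement follow because the
   run depends only on the syndrome and because the fault distance is d. *)

Section SymmetricDifference.
Variable T : finType.
Implicit Types A B X : {set T}.

Lemma in_symd A B x : (x \in symd A B) = (x \in A) (+) (x \in B).
Proof. by rewrite /symd !inE; case: (x \in A); case: (x \in B). Qed.

Lemma symdC A B : symd A B = symd B A.
Proof. by apply/setP => x; rewrite !in_symd addbC. Qed.

Lemma symdA A B X : symd A (symd B X) = symd (symd A B) X.
Proof. by apply/setP => x; rewrite !in_symd addbA. Qed.

Lemma symd0 A : symd A set0 = A.
Proof. by apply/setP => x; rewrite in_symd inE addbF. Qed.

Lemma symdv A : symd A A = set0.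
Proof. by apply/setP => x; rewrite in_symd inE addbb. Qed.

Lemma symd_eq0 A B : (symd A B == set0) = (A == B).
Proof.
apply/eqP/eqP => [AB0 | -> ]; last exact: symdv.
by rewrite -[A]symd0 -(symdv B) symdA AB0 symdC symd0.
Qed.

Lemma symdIl A B X : symd A B :&: X = symd (A :&: X) (B :&: X).
Proof. by apply/setP => x; rewrite !(inE, in_symd); case: (x \in X); rewrite ?andbT ?andbF. Qed.

Lemma symd_sub A B X : A \subset X -> B \subset X -> symd A B \subset X.
Proof.
by move=> AX BX; rewrite /symd subUset; apply/andP; split; apply: subset_trans (subsetDl _ _) _.
Qed.

Lemma card_indicator A : #|A| = \sum_x (x \in A : nat).
Proof. by rewrite -sum1_card big_mkcond; apply: eq_bigr => x _; case: (x \in A). Qed.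

Lemma card_symd_le A B : #|symd A B| <= #|A| + #|B|.
Proof.
rewrite !card_indicator -big_split /=; apply: leq_sum => x _.
by rewrite in_symd; case: (x \in A); case: (x \in B).
Qed.

Lemma odd_card_symd A B : odd #|symd A B| = odd #|A| (+) odd #|B|.
Proof.
have card_split : #|symd A B| + (#|A :&: B|).*2 = #|A| + #|B|.
  rewrite -addnn !card_indicator -!big_split /=; apply: eq_bigr => x _.
  by rewrite in_symd inE; case: (x \in A); case: (x \in B).
by rewrite -oddD -card_split oddD odd_double addbF.
Qed.

Lemma disjoint_at A A' x : [disjoint A & A'] -> ~~ ((x \in A) && (x \in A')).
Proof. by move=> AA'; apply/andP => -[xA]; rewrite (disjointFr AA' xA). Qed.

Lemma subset_at A A' x : A \subset A' -> (x \in A) ==> (x \in A').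
Proof. by move=> /subsetP AA'; apply/implyP/AA'. Qed.

End SymmetricDifference.

Section ParityMaps.
Variables (T U : finType) (P : T -> U -> bool).

Definition parity_map (A : {set T}) : {set U} := [set u | odd #|[set x in A | P x u]|].

Lemma parity_map_symd A A' : parity_map (symd A A') = symd (parity_map A) (parity_map A').
Proof.
apply/setP => u; rewrite in_symd !inE -odd_card_symd; congr odd; apply: eq_card => x.
by rewrite !(inE, in_symd); case: (P x u); rewrite ?andbT ?andbF.
Qed.

Lemma parity_map0 : parity_map set0 = set0.
Proof.
apply/setP => u; rewrite !inE (_ : [set x in set0 | P x u] = set0) ?cards0 //.
by apply/setP => x; rewrite !inE.
Qed.

Lemma parity_map_support A u : u \in parity_map A -> exists2 x, x \in A & P x u.
Proof.
rewrite inE => /odd_gt0 /card_gt0P [x]; rewrite inE => /andP[xA Pxu].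
by exists x.
Qed.

End ParityMaps.

Section Components.
Variables (E Sig : finType) (D : E -> Sig -> bool).
Implicit Types (eta S X : {set E}) (c e x y : E).

Lemma syn_symd A A' : syn D (symd A A') = symd (syn D A) (syn D A').
Proof. exact: parity_map_symd. Qed.

Lemma logeff_symd (M : finType) (L : E -> M -> bool) A A' :
  logeff L (symd A A') = symd (logeff L A) (logeff L A').
Proof. exact: parity_map_symd. Qed.

Lemma syn0 : syn D set0 = set0.
Proof. exact: parity_map0. Qed.

Definition within eta : rel E := [rel a b | [&& a \in eta, b \in eta & adj D a b]].

(* S is a union of connected components of eta. *)
Definition closed_in eta S : Prop :=
  S \subset eta /\ forall x y, x \in S -> y \in eta -> adj D x y -> y \in S.

Lemma closed_parity eta S e t : closed_in eta S -> e \in S -> D e t ->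
  (t \in syn D S) = (t \in syn D eta).
Proof.
move=> [S_eta S_closed] eS Det; rewrite /syn !inE; congr odd; apply: eq_card => x.
rewrite !inE; case Dxt: (D x t); rewrite ?andbF ?andbT //.
apply/idP/idP => [/(subsetP S_eta) // | x_eta].
by apply: (S_closed e) => //; apply/existsP; exists t; rewrite Det Dxt.
Qed.

Lemma closed_syn_sub eta S : closed_in eta S -> syn D S \subset syn D eta.
Proof.
move=> S_closed; apply/subsetP => t tS.
have [e eS Det] := parity_map_support tS.
by rewrite -(closed_parity S_closed eS Det).
Qed.

Definition component eta c : {set E} := [set x | connect (within eta) c x].

Lemma within_sym eta : symmetric (within eta).
Proof.
move=> a b; rewrite /within /= andbCA; congr (_ && (_ && _)).
by apply/existsP/existsP => -[t /andP[Dat Dbt]]; exists t; rewrite Dat Dbt.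
Qed.

Lemma connect_within eta c x : c \in eta -> connect (within eta) c x -> x \in eta.
Proof.
move=> c_eta /(closed_connect (_ : closed (within eta) eta)) <- //.
by move=> a b /and3P[-> ->].
Qed.

Lemma component_closed eta c : c \in eta -> closed_in eta (component eta c).
Proof.
move=> c_eta; split=> [|x y]; first by apply/subsetP => x; rewrite inE; exact: connect_within.
rewrite !inE => cx y_eta xy; have x_eta := connect_within c_eta cx.
by apply: connect_trans cx (connect1 _); rewrite /within /= x_eta y_eta.
Qed.

Lemma component_connected eta c : c \in eta -> connected_err D (component eta c).
Proof.
move=> c_eta x y; rewrite !inE => cx cy.
have /connectP[p xp ->] : connect (within eta) x y.
  by apply: connect_trans _ cy; rewrite (sym_connect_sym (@within_sym eta)).
apply/connectP; exists p => //; elim: p x cx xp {cy} => //= z p IHp x cx /andP[xz zp].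
have cz : connect (within eta) c z := connect_trans cx (connect1 xz).
by rewrite IHp // andbT !inE cx cz; case/and3P: xz => _ _ ->.
Qed.

Definition reach eta X : {set E} := \bigcup_(c in eta :&: X) component eta c.

Lemma reach_closed eta X : closed_in eta (reach eta X).
Proof.
split=> [|x y].
  by apply/bigcupsP => c; rewrite inE => /andP[c_eta _]; case: (component_closed c_eta).
move=> /bigcupP[c]; rewrite inE => /andP[c_eta cX] xc y_eta xy.
apply/bigcupP; exists c; first by rewrite inE c_eta.
by case: (component_closed c_eta) => _ /(_ x y xc y_eta xy).
Qed.

Lemma reach_cover eta X : eta :&: X \subset reach eta X.
Proof. by apply/subsetP => c cX; apply/bigcupP; exists c; rewrite // inE connect0. Qed.

Lemma reach_syn0 eta X :
  (forall c, c \in eta -> c \in X -> syn D (component eta c) = set0) ->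
  syn D (reach eta X) = set0.
Proof.
move=> comp0; apply/eqP; rewrite -subset0; apply/subsetP => t t_reach.
have [e /bigcupP[c]] := parity_map_support t_reach.
rewrite inE => /andP[c_eta cX] e_comp Det.
have e_reach : e \in reach eta X by apply/bigcupP; exists c => //; rewrite inE c_eta cX.
have : t \in syn D (component eta c).
  rewrite (closed_parity (component_closed c_eta) e_comp Det).
  by rewrite -(closed_parity (reach_closed eta X) e_reach Det).
by rewrite comp0 // inE.
Qed.

End Components.

Section ResidualUpdate.
Variables (T : finType) (P Ci Bi rho mu S : {set T}).
Hypotheses (rho_P : [disjoint rho & P]) (Ci_P : [disjoint Ci & P])
  (Bi_PC : [disjoint Bi & P :|: Ci]) (mu_win : mu \subset Ci :|: Bi)
  (S_eta : S \subset symd mu (rho :&: (Ci :|: Bi)))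
  (etaC_S : symd mu (rho :&: (Ci :|: Bi)) :&: Ci \subset S).

Lemma residual_update_at x :
  let rho' := symd (symd rho (mu :&: Ci)) S in
  (x \in rho') ==> (x \notin P :|: Ci) /\
  (x \in mu :&: Ci) + (x \in rho') + (x \in symd mu S) <= (x \in rho) + (x \in mu).
Proof.
move: (disjoint_at x rho_P) (disjoint_at x Ci_P) (disjoint_at x Bi_PC)
  (subset_at x mu_win) (subset_at x S_eta) (subset_at x etaC_S).
rewrite /= !(in_symd, inE).
by case: (x \in P); case: (x \in Ci); case: (x \in Bi); case: (x \in rho);
   case: (x \in mu); case: (x \in S).
Qed.

Lemma residual_update_disjoint : [disjoint symd (symd rho (mu :&: Ci)) S & P :|: Ci].
Proof.
rewrite disjoints_subset; apply/subsetP => x x_rho'.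
by have [/implyP/(_ x_rho') ? _] := residual_update_at x; rewrite inE.
Qed.

Lemma residual_update_weight :
  #|mu :&: Ci| + #|symd (symd rho (mu :&: Ci)) S| + #|symd mu S| <= #|rho| + #|mu|.
Proof.
rewrite !card_indicator -!big_split /=; apply: leq_sum => x _.
by have [_] := residual_update_at x.
Qed.

End ResidualUpdate.

Section Locality.
Variables (E Sig : finType) (D : E -> Sig -> bool) (C B : nat -> {set E}).
Implicit Types A : {set E}.

Lemma synV_symd i A A' :
  synV D C B i (symd A A') = symd (synV D C B i A) (synV D C B i A').
Proof. by rewrite /synV syn_symd symdIl. Qed.

(* An error outside the past is seen by task i only through its part in the
   commit and buffer regions: future generators touch no visible check. *)
Lemma synV_local i A : [disjoint A & past C i] ->
  synV D C B i A = synV D C B i (A :&: (C i :|: B i)).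
Proof.
move=> A_past; apply/setP => t; rewrite /synV !in_setI.
case vis: (t \in visible D C B i); rewrite ?andbF ?andbT // /syn !inE.
congr odd; apply: eq_card => x; rewrite !inE.
case Dxt: (D x t); rewrite ?andbF ?andbT //.
case xA: (x \in A) => //=.
move: vis; rewrite inE => /forall_inP /(_ x); rewrite Dxt /future !inE (disjointFr A_past xA) /=.
by case: ((x \in C i) || (x \in B i)) => // /(_ isT).
Qed.

Lemma pastS i : past C i.+1 = past C i :|: C i.
Proof. by rewrite /past big_ord_recr. Qed.

End Locality.

Section ModularDecoding.
Variables (E Sig : finType) (D : E -> Sig -> bool) (d n : nat)
  (C B : nat -> {set E}) (dec : nat -> {set Sig} -> option {set E}).

Definition sound_decoders : Prop :=
  forall (eps : {set E}) i K, i < n -> kapP D C B dec eps i = Some K ->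
  let s := synV D C B i (symd K eps) in
  (exists2 eta : {set E}, eta \subset C i :|: B i & 2 * #|eta| < d /\ synV D C B i eta = s) ->
  exists mu : {set E}, [/\ dec i s = Some mu, mu \subset C i :|: B i,
    synV D C B i mu = s &
    forall mu' : {set E}, mu' \subset C i :|: B i -> synV D C B i mu' = s -> #|mu| <= #|mu'|].

Definition buffered : Prop :=
  forall i, i < n -> forall eta : {set E},
  connected_err D eta -> eta \subset C i :|: B i -> synV D C B i eta = set0 ->
  eta :&: C i != set0 -> syn D eta != set0 -> d <= #|eta|.

Hypotheses
  (C_disj : forall i j, i < n -> j < n -> i != j -> [disjoint C i & C j])
  (C_cover : forall e : E, exists2 i, i < n & e \in C i)
  (B_disj : forall i, i < n -> [disjoint B i & past C i :|: C i])
  (sound : sound_decoders) (buffer : buffered).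

Lemma commit_past i : i < n -> [disjoint C i & past C i].
Proof.
move=> lt_in; rewrite disjoint_sym disjoints_subset; apply/bigcupsP => j _.
rewrite -disjoints_subset; apply: C_disj => //; first exact: ltn_trans (ltn_ord j) lt_in.
by rewrite neq_ltn ltn_ord.
Qed.

(* A light error invisible to task i has its components touching C i all
   undetectable, hence so is their union. *)
Lemma buffer_clean i (eta : {set E}) : i < n -> eta \subset C i :|: B i ->
  synV D C B i eta = set0 -> #|eta| < d -> syn D (reach D eta (C i)) = set0.
Proof.
move=> lt_in eta_win eta_vis eta_small; apply: reach_syn0 => c c_eta c_C.
have comp_cl := component_closed D c_eta; have comp_eta := comp_cl.1.
apply/eqP; apply: contraTT eta_small => syn_c; rewrite -leqNgt.
apply: leq_trans (subset_leq_card comp_eta).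
apply: buffer lt_in _ (component_connected c_eta) (subset_trans comp_eta eta_win) _ _ syn_c.
- apply/eqP; rewrite -subset0 -eta_vis; apply: setSI.
  exact: closed_syn_sub comp_cl.
- by apply/set0Pn; exists c; rewrite !inE connect0 c_C.
Qed.


(* Loop invariant after i tasks: committed correction K and residual rho. *)
Definition progress (eps : {set E}) i (K rho : {set E}) : Prop :=
  [/\ kapP D C B dec eps i = Some K, [disjoint rho & past C i],
      syn D rho = syn D (symd K eps) & #|K| + #|rho| <= #|eps|].

Lemma progress_step (eps : {set E}) i K rho : i < n -> 2 * #|eps| < d ->
  progress eps i K rho -> exists K' rho', progress eps i.+1 K' rho'.
Proof.
move=> lt_in eps_small [run rho_past rho_syn weight].
set s := synV D C B i (symd K eps).
set rho_i := rho :&: (C i :|: B i).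
have s_rho_i : s = synV D C B i rho_i by rewrite -synV_local // /s /synV rho_syn.
have rho_i_win : rho_i \subset C i :|: B i := subsetIr _ _.
have rho_i_small : 2 * #|rho_i| < d.
  by have := subset_leq_card (subsetIl _ _ : rho_i \subset rho); lia.
have /= := sound lt_in run; rewrite -/s; case; first by exists rho_i.
move=> mu [dec_mu mu_win mu_syn mu_min].
set eta := symd mu rho_i.
have eta_win : eta \subset C i :|: B i := symd_sub mu_win rho_i_win.
have eta_vis : synV D C B i eta = set0 by rewrite synV_symd mu_syn -s_rho_i symdv.
have eta_small : #|eta| < d.
  have := mu_min rho_i rho_i_win (esym s_rho_i); have := card_symd_le mu rho_i; rewrite -/eta; lia.
set S := reach D eta (C i).
have S_syn : syn D S = set0 := buffer_clean lt_in eta_win eta_vis eta_small.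
have S_eta : S \subset eta := (reach_closed D eta (C i)).1.
have mu_le : #|mu| <= #|symd mu S|.
  apply: mu_min; first exact: symd_sub mu_win (subset_trans S_eta eta_win).
  by rewrite synV_symd mu_syn /synV S_syn set0I symd0.
exists (symd K (mu :&: C i)), (symd (symd rho (mu :&: C i)) S); split.
- by rewrite /= run -/s dec_mu.
- rewrite pastS; apply: residual_update_disjoint mu_win S_eta (reach_cover D eta (C i)) => //.
  + exact: commit_past.
  + exact: B_disj.
- by rewrite !syn_symd S_syn symd0 rho_syn syn_symd -!symdA (symdC (syn D eps)).
- have := card_symd_le K (mu :&: C i).
  have := residual_update_weight rho_past (commit_past lt_in) (B_disj lt_in) mu_win S_eta (reach_cover D eta (C i)).
  lia.
Qed.

Lemma progress_upto (eps : {set E}) : 2 * #|eps| < d ->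
  forall i, i <= n -> exists K rho, progress eps i K rho.
Proof.
move=> eps_small; elim=> [_ | i IHi lt_in].
  exists set0, eps; split=> //; last by rewrite cards0.
  - by rewrite /past big_ord0 disjoint_sym disjoints_subset sub0set.
  - by rewrite symdC symd0.
have [K [rho inv]] := IHi (ltnW lt_in).
exact: progress_step lt_in eps_small inv.
Qed.

Lemma past_all : past C n = setT.
Proof.
apply/setP => x; rewrite inE; have [i lt_in xC] := C_cover x.
by apply/bigcupP; exists (Ordinal lt_in).
Qed.

Lemma decoding_succeeds (eps : {set E}) : 2 * #|eps| < d ->
  exists K, [/\ kapP D C B dec eps n = Some K, syn D K = syn D eps & #|K| <= #|eps|].
Proof.
move=> eps_small; have [K [rho [run rho_past rho_syn weight]]] := progress_upto eps_small (leqnn n).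
have rho0 : rho = set0 by move: (disjoint_setI0 rho_past); rewrite past_all setIT.
exists K; split=> //; last by move: weight; rewrite rho0 cards0 addn0.
by apply/eqP; rewrite -symd_eq0 -syn_symd -rho_syn rho0 syn0.
Qed.

End ModularDecoding.

Lemma kapP_syn (E Sig : finType) (D : E -> Sig -> bool) C B dec (eps eps' : {set E}) k :
  syn D eps = syn D eps' -> kapP D C B dec eps k = kapP D C B dec eps' k.
Proof.
move=> same_syn; elim: k => //= k ->.
by case: (kapP D C B dec eps' k) => // K; rewrite !synV_symd /synV same_syn.
Qed.

Lemma small_undetectable_trivial (E Sig M : finType) (D : E -> Sig -> bool)
    (L : E -> M -> bool) d (A : {set E}) :
  (forall eta : {set E}, syn D eta = set0 -> logeff L eta != set0 -> d <= #|eta|) ->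
  syn D A = set0 -> #|A| < d -> logeff L A = set0.
Proof.
by move=> dist A_syn; apply: contraTeq => A_log; rewrite -leqNgt dist.
Qed.

Theorem mainTheorem1 (E Sig M : finType) (D : E -> Sig -> bool)
  (L : E -> M -> bool) (d n : nat) (C B : nat -> {set E})
  (dec : nat -> {set Sig} -> option {set E}) :
  is_fault_distance D L d ->
  (* C 0, ..., C (n-1) partition E *)
  (forall i j, i < n -> j < n -> i != j -> [disjoint C i & C j]) ->
  (forall e : E, exists2 i, i < n & e \in C i) ->
  (* buffers *)
  (forall i, i < n -> [disjoint B i & past C i :|: C i]) ->
  (* local decoder contract *)
  (forall i s, i < n ->
     match dec i s with
     | Some mu => mu \subset C i :|: B i /\ synV D C B i mu = s
     | None => ~ (exists mu : {set E}, mu \subset C i :|: B i /\ synV D C B i mu = s)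
     end) ->
  (* 1. local decoder soundness *)
  (forall (eps : {set E}) i K, i < n -> kapP D C B dec eps i = Some K ->
     let s := synV D C B i (symd K eps) in
     (exists2 eta : {set E}, eta \subset C i :|: B i & 2 * #|eta| < d /\ synV D C B i eta = s) ->
     exists mu : {set E}, [/\ dec i s = Some mu, mu \subset C i :|: B i,
                    synV D C B i mu = s &
                    forall mu' : {set E}, mu' \subset C i :|: B i -> synV D C B i mu' = s ->
                                #|mu| <= #|mu'|]) ->
  (* 2. buffering condition *)
  (forall i, i < n -> forall eta : {set E},
     connected_err D eta -> eta \subset C i :|: B i -> synV D C B i eta = set0 ->
     eta :&: C i != set0 -> syn D eta != set0 -> d <= #|eta|) ->
  forall eps : {set E}, 2 * #|eps| < d ->
  exists kappa : {set E}, [/\ kapP D C B dec eps n = Some kappa,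
     syn D kappa = syn D eps, #|kappa| <= #|eps|,
     (forall kappa' : {set E}, syn D kappa' = syn D eps -> #|kappa| <= #|kappa'|) &
     logeff L kappa = logeff L eps].
Proof.
move=> [_ dist] C_disj C_cover B_disj _ sound buffer.
have decode := decoding_succeeds C_disj C_cover B_disj sound buffer.
move=> eps eps_small; have [K [run K_syn K_weight]] := decode eps eps_small.
exists K; split=> // [K' K'_syn | ].
- (* a lighter correction would itself be a small error with the same run *)
  have [K'_small | ] := ltnP (2 * #|K'|) d; last by lia.
  have [K'' [run' _ K''_weight]] := decode K' K'_small.
  by move: run'; rewrite (kapP_syn C B dec n K'_syn) run => -[->].
- (* K + eps is undetectable and lighter than the fault distance *)
  apply/eqP; rewrite -symd_eq0 -logeff_symd; apply/eqP.
  apply: small_undetectable_trivial dist _ _; first by rewrite syn_symd K_syn symdv.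
  by have := card_symd_le K eps; lia.
Qed.
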